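(* Let $u,\alpha\in k[T]$ satisfy $P_2(T)^p-P_2^\sigma(T^p)=m_p\bigl(\bar P'(T)^p u(T)-2\alpha(T)\bar P(T)^p\bigr)$, and let $v,\beta\in k[T]$ satisfy $Q_2(T)^p-Q_2^\sigma(T^p)=m_p\bigl(\bar Q'(T)^p v(T)-2\beta(T)\bar Q(T)^p\bigr)$. For $0\leq i\leq g-1$ set $$f_U=x^{ip}\,\frac{x^{p-1}+u'(x)}{y^{p-1}}\,\frac{dx}{y},\quad f_V=-x_1^{p(g-1-i)}\,\frac{x_1^{p-1}+v'(x_1)}{t^{p-1}}\,\frac{dx_1}{t},\quad h=x^{ip}\,\frac{u(x)+x^{2p}v(x_1)}{y^p}.$$ Then $f_U\in\Omega^1_{U_0/k}$, $f_V\in\Omega^1_{V_0/k}$ (i.e. they are regular differentials on $U_0$, resp. $V_0$), $h\in\mathcal{O}(U_0\cap V_0)$, and $$f_V-f_U+dh=0.$$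
   Context: $k$ is a finite field of characteristic $p\neq 2$, $W_2(k)=W(k)/p^2$, $\sigma$ the Frobenius of $W_2(k)$; for $Q=\sum b_jT^j$, $Q^\sigma=\sum\sigma(b_j)T^j$; $m_p:k[T]\to W_2(k)[T]$ is induced by multiplication by $p$. Let $P\in W(k)[X]$ be monic of odd degree $d=2g+1$, separable over $\operatorname{Frac}W(k)$, with separable reduction $\bar P\in k[X]$; $P_2$ is its reduction mod $p^2$, $Q_2(x_1)=x_1^{d+1}P_2(1/x_1)$, $\bar Q(x_1)=x_1^{d+1}\bar P(1/x_1)$. $X_0$ is the curve over $k$ obtained by gluing $U_0=\operatorname{Spec}k[x,y]/(y^2-\bar P(x))$ and $V_0=\operatorname{Spec}k[x_1,t]/(t^2-\bar Q(x_1))$ along $x_1=1/x$, $t=y/x^{g+1}$. (These pairs $(u,\alpha)$ and $(v,\beta)$ define lifts of Frobenius $x\mapsto x^p+p\,u(x)$, $y\mapsto y^p+y^p p\,\alpha(x)$ on $U_1$ and $x_1\mapsto x_1^p+p\,v(x_1)$, $t\mapsto t^p+t^p p\,\beta(x_1)$ on $V_1$; the triple $(f_U,f_V,h)$ is the image of $x^i\,dx/y$ under the associated Deligne–Illusie map.) *)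

From HB Require Import structures.
From mathcomp Require Import all_boot all_order all_algebra all_field.
Set Implicit Arguments. Unset Strict Implicit. Unset Printing Implicit Defensive.
Import GRing.Theory.
Local Open Scope ring_scope.

Definition evp (k K : fieldType) (iota : {rmorphism k -> K}) (q : {poly k}) (z : K) : K :=
  (map_poly iota q).[z].

Definition ev2 (k K : fieldType) (iota : {rmorphism k -> K})
  (F : {poly {poly k}}) (z w : K) : K :=
  (map_poly (fun c => evp iota c z) F).[w].

(* a lies in the image of k[X,Y] -> K, X |-> z, Y |-> w, i.e. the coordinate
   ring O(U) = k[z,w] of the affine chart, viewed inside the function field K. *)
Definition in_coord (k K : fieldType) (iota : {rmorphism k -> K}) (z w a : K) : Prop :=
  exists F : {poly {poly k}}, a = ev2 iota F z w.

Definition in_localization (k K : fieldType) (iota : {rmorphism k -> K}) (z w a : K) : Prop :=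
  exists (n : nat) (b : K), in_coord iota z w b /\ a = b / z ^+ n.

(* Meromorphic 1-forms on the curve are written  f dx  (dx a basis of the
   1-dimensional K-space Omega^1_K), and represented by the coefficient f.
   The Kaehler derivation d : K -> Omega^1_K is  d a = (D a) dx  where D is the
   derivation of K with D x = 1.  The 1-form f dx is regular on the affine chart
   with coordinate ring k[z,w] iff it is in the image of Omega^1_{k[z,w]/k},
   i.e. it is a finite sum  sum a_j d b_j  with a_j, b_j in k[z,w]. *)
Definition regular_form (k K : fieldType) (iota : {rmorphism k -> K}) (D : K -> K)
  (z w f : K) : Prop :=
  exists s : seq (K * K),
    (forall ab, ab \in s -> in_coord iota z w ab.1 /\ in_coord iota z w ab.2) /\
    f = \sum_(ab <- s) ab.1 * D ab.2.

(* R = m_p(Q) in W_2(k)[T]: R is p times a lift of Q. *)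
Definition is_mp (W : comNzRingType) (k : fieldType) (p : nat)
  (pi : {rmorphism W -> k}) (Q : {poly k}) (R : {poly W}) : Prop :=
  exists L : {poly W}, map_poly pi L = Q /\ R = p%:R *: L.

(* recip d P = x^(d+1) P(1/x)  for P of degree <= d. *)
Definition recip (R : nzRingType) (d : nat) (P : {poly R}) : {poly R} :=
  \poly_(m < d.+2) P`_(d.+1 - m).

From HB Require Import structures.
From mathcomp Require Import all_boot all_order all_algebra all_field.
From mathcomp Require Import zify ring.
Import GRing.Theory.
Local Open Scope ring_scope.
Set Implicit Arguments. Unset Strict Implicit. Unset Printing Implicit Defensive.

(* Differentiating the relation  P^p - P^sigma(T^p) = p (P'^p u - 2 alpha P^p)  and
   dividing by p gives, in characteristic p,  P'^p (T^(p-1) + u') = P^(p-1) (P' + 2 alpha' P).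
   As P is separable, P^(p-1) divides T^(p-1) + u', so that f_U = x^(ip) r(x) y^(p-2) dx is
   regular on U_0; the same argument applies on V_0, since Q is again separable.
   The relation for Q is the reversal of the relation for P; evaluated at 1/x it gives
   P'(x)^p (u(x) + x^(2p) v(1/x)) = P(x)^p (...), so that y^(2p) = P(x)^p divides
   x^M (u(x) + x^(2p) v(1/x)) and h is regular on U_0 /\ V_0.  Finally f_V - f_U + dh = 0
   is a direct computation, p-th powers being constants for d/dx. *)

Definition revp (R : nzRingType) (n : nat) (F : {poly R}) : {poly R} :=
  \poly_(j < n.+1) F`_(n - j).

Lemma coef_revp (R : nzRingType) n (F : {poly R}) j :
  (revp n F)`_j = if (j <= n)%N then F`_(n - j) else 0.
Proof. exact: coef_poly. Qed.

Fact revp_is_semilinear (R : nzRingType) n : semilinear (@revp R n).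
Proof.
by split=> [c F|F G]; apply/polyP=> j; rewrite !(coef_revp, coefZ, coefD);
  case: ifP; rewrite ?mulr0 ?addr0.
Qed.
HB.instance Definition _ (R : nzRingType) n :=
  GRing.isSemilinear.Build R {poly R} {poly R} _ (@revp R n) (@revp_is_semilinear R n).

Lemma recipE (R : nzRingType) d (F : {poly R}) : recip d F = revp d.+1 F.
Proof. by []. Qed.

Lemma map_revp (R S : nzRingType) (f : {rmorphism R -> S}) n (F : {poly R}) :
  map_poly f (revp n F) = revp n (map_poly f F).
Proof.
apply/polyP=> j; rewrite coef_map /= !coef_revp coef_map.
by case: ifP; rewrite ?rmorph0.
Qed.

Lemma size_map_poly_leq (R S : nzRingType) (f : R -> S) (F : {poly R}) :
  (size (map_poly f F) <= size F)%N.
Proof. exact: size_poly. Qed.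

Lemma coefK_leq (R : nzRingType) n (F : {poly R}) :
  (size F <= n)%N -> \poly_(j < n) F`_j = F.
Proof.
move=> hF; apply/polyP=> j; rewrite coef_poly.
by case: ltnP => // hj; rewrite nth_default // (leq_trans hF).
Qed.

Section Reversal.
Variable R : nzRingType.
Implicit Types F G : {poly R}.

Lemma revpXn n a : (a <= n)%N -> revp n ('X^a : {poly R}) = 'X^(n - a).
Proof.
move=> han; apply/polyP=> j; rewrite coef_revp !coefXn.
case: leqP => hj; first by congr (_%:R); apply/eqP/eqP; lia.
by case: eqP => //; lia.
Qed.

Lemma revp_sum n F : (size F <= n.+1)%N ->
  revp n F = \sum_(j < n.+1) F`_j *: 'X^(n - j).
Proof.
move=> hF; rewrite -{1}(coefK_leq hF) poly_def linear_sum.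
by apply: eq_bigr => j _; rewrite linearZ /= revpXn // -ltnS.
Qed.

End Reversal.

Section ReversalCom.
Variable R : comNzRingType.
Implicit Types F G : {poly R}.

Lemma revpM n m F G : (size F <= n.+1)%N -> (size G <= m.+1)%N ->
  revp (n + m) (F * G) = revp n F * revp m G.
Proof.
move=> hF hG; rewrite (revp_sum hF) (revp_sum hG).
rewrite -{1}(coefK_leq hF) -{1}(coefK_leq hG) !poly_def !big_distrlr linear_sum.
apply: eq_bigr => j _; rewrite linear_sum; apply: eq_bigr => l _.
have := ltn_ord j; have := ltn_ord l; rewrite !ltnS => hl hj.
rewrite /= -!scalerAl -!scalerAr !scalerA -!exprD linearZ /= revpXn; last by lia.
by congr (_ *: 'X^_); lia.
Qed.

Lemma revpX e n F : (size F <= n.+1)%N -> revp (e * n) (F ^+ e) = revp n F ^+ e.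
Proof.
move=> hF; elim: e => [|e IH]; first by rewrite mul0n !expr0 -(expr0 'X) revpXn.
rewrite !exprSr mulSnr revpM ?IH //.
apply: leq_trans (size_poly_exp_leq _ _) _; rewrite ltnS mulnC leq_mul2l.
by case: (size F) hF => [|s] hs; rewrite /= ?orbT // -ltnS hs orbT.
Qed.

Lemma revp_comp_Xn q n F : (0 < q)%N -> (size F <= n.+1)%N ->
  revp (q * n) (F \Po 'X^q) = revp n F \Po 'X^q.
Proof.
move=> hq hF; rewrite (revp_sum hF) -{1}(coefK_leq hF) poly_def !linear_sum.
apply: eq_bigr => j _; rewrite /= !linearZ /= !comp_Xn_poly -!exprM revpXn -?mulnBr //.
by rewrite leq_mul2l -ltnS ltn_ord orbT.
Qed.

Lemma revp_deriv d F : revp d F^`() = revp d.+1 F *+ d.+1 - 'X * (revp d.+1 F)^`().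
Proof.
apply/polyP=> [[|j]]; rewrite coefB coefMn coefXM ?coef_deriv !coef_revp //=.
  by rewrite !subn0 subr0 coef_deriv.
case: (ltngtP j d) => hj.
- rewrite ltnS (ltnW hj) coef_deriv -mulrnBr; last by lia.
  by congr (_ *+ _); [congr (_`_ _) |]; lia.
- by rewrite ltnS (ltn_geF hj) !mul0rn subrr.
- by rewrite hj ltnSn subrr.
Qed.

End ReversalCom.

Lemma horner_revp (K : fieldType) n (F : {poly K}) z : z != 0 ->
  (size F <= n.+1)%N -> (revp n F).[z^-1] = z ^- n * F.[z].
Proof.
move=> z0 hF; rewrite (revp_sum hF) -{2}(coefK_leq hF) poly_def !horner_sum.
rewrite mulr_sumr; apply: eq_bigr => j _; rewrite !hornerZ !hornerXn mulrCA.
have hj : (j <= n)%N by rewrite -ltnS.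
have -> : z ^+ n = z ^+ (n - j) * z ^+ j by rewrite -exprD subnK.
by congr (_ * _); rewrite invfM -mulrA mulVf ?mulr1 ?exprVn // expf_neq0.
Qed.

Lemma coprimep_revp_deriv (K : fieldType) d (P : {poly K}) :
  size P = d.+1 -> coprimep P P^`() -> coprimep (revp d.+1 P) (revp d.+1 P)^`().
Proof.
move=> sP /Bezout_eq1_coprimepP [[A B] /= hAB].
set Q := revp d.+1 P; set n := (size A + size B)%N.
have sP' : (size P^`() <= d.+1)%N.
  by rewrite -sP ltnW // lt_size_deriv // -size_poly_gt0 sP.
have sA : (size A <= n.+1)%N by rewrite leqW // leq_addr.
have sB : (size B <= n.+2)%N by rewrite !leqW // leq_addl.
have XN : 'X^(n + d.+1) = (revp n A + revp n.+1 B *+ d.+1) * Q - revp n.+1 B * 'X * Q^`().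
  rewrite -[(n + d.+1)%N]subn0 -revpXn // expr0 -hAB linearD /= revpM ?sP //.
  by rewrite -addSnnS revpM // revp_deriv -/Q; ring.
have X_Q' : coprimep 'X Q^`().
  rewrite coprimep_sym -['X]subr0 -polyC0 coprimep_XsubC /root horner_coef0.
  rewrite coef_deriv coef_revp /= subSS subn0 mulr1n.
  by rewrite -[d]/(d.+1.-1) -sP -lead_coefE lead_coef_eq0 -size_poly_eq0 sP.
apply/coprimepP => C CQ CQ'; move/coprimepP: (coprimep_expl (n + d.+1) X_Q'); apply=> //.
by rewrite XN dvdp_sub // dvdp_mull.
Qed.

Lemma revp_frobenius_defect (W : comNzRingType) (sigma : {rmorphism W -> W}) p n
    (F : {poly W}) : (0 < p)%N -> (size F <= n.+1)%N ->
  revp (p * n) (F ^+ p - (map_poly sigma F \Po 'X^p))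
  = revp n F ^+ p - (map_poly sigma (revp n F) \Po 'X^p).
Proof.
move=> p_gt0 hF; have sF : (size (map_poly sigma F) <= n.+1)%N.
  by rewrite (leq_trans (size_map_poly_leq _ _)).
by rewrite linearB /= revpX // revp_comp_Xn // map_revp.
Qed.

Lemma size_frobenius_defect (W : comNzRingType) (sigma : {rmorphism W -> W}) p n
    (F : {poly W}) : (size F <= n.+1)%N ->
  (size (F ^+ p - (map_poly sigma F \Po 'X^p))%R <= (p * n).+1)%N.
Proof.
move=> hF; have hF' : ((size F).-1 <= n)%N by rewrite -subn1 leq_subLR add1n.
have sF : ((size (map_poly sigma F)).-1 <= n)%N.
  by rewrite -subn1 leq_subLR add1n (leq_trans (size_map_poly_leq _ _)).
rewrite (leq_trans (size_polyD _ _)) // size_polyN geq_max mulnC.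
rewrite (leq_trans (size_poly_exp_leq _ _)) ?ltnS ?leq_mul2r ?hF' ?orbT //=.
by rewrite (leq_trans (size_comp_poly_leq _ _)) // size_polyXn ltnS leq_mul2r sF orbT.
Qed.

Lemma exp_pchar_poly (R : comNzRingType) p (chp : p \in [pchar R]) (G : {poly R}) :
  G ^+ p = map_poly (pFrobenius_aut chp) G \Po 'X^p.
Proof.
have chP : p \in [pchar {poly R}] := rmorph_pchar polyC chp.
have p_gt0 : (0 < p)%N := prime_gt0 (pcharf_prime chp).
elim/poly_ind: G => [|G c IH]; first by rewrite rmorph0 comp_poly0 expr0n gtn_eqF.
rewrite -(pFrobenius_autE chP) rmorphD /= !pFrobenius_autE exprMn IH.
rewrite rmorphD rmorphM /= map_polyX map_polyC /= comp_polyD comp_polyM.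
by rewrite comp_polyX comp_polyC -polyC_exp pFrobenius_autE.
Qed.

Section FrobeniusLift.
Variables (W : comNzRingType) (k : fieldType) (p : nat) (pi : {rmorphism W -> k}).
Hypothesis pi_ker : forall z : W, p%:R * z = 0 -> pi z = 0.

Lemma map_poly_scale_pchar_eq0 (L : {poly W}) : p%:R *: L = 0 -> map_poly pi L = 0.
Proof.
move=> pL0; apply/polyP=> j; rewrite coef_map coef0 /= pi_ker //.
by rewrite -coefZ pL0 coef0.
Qed.

Lemma is_mp_inj A B (R : {poly W}) : is_mp p pi A R -> is_mp p pi B R -> A = B.
Proof.
move=> [L [<- RL]] [M [<- RM]]; apply/eqP; rewrite -subr_eq0 -rmorphB.
by apply/eqP/map_poly_scale_pchar_eq0; rewrite scalerBr -RL -RM subrr.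
Qed.

Lemma is_mp_revp n A (R : {poly W}) : is_mp p pi A R -> is_mp p pi (revp n A) (revp n R).
Proof. by move=> [L [<- ->]]; exists (revp n L); rewrite map_revp linearZ. Qed.

Lemma size_is_mp A (R : {poly W}) : is_mp p pi A R -> (size A <= size R)%N.
Proof.
move=> [L [<- RL]]; apply/leq_sizeP => j hj; rewrite coef_map /= pi_ker //.
by rewrite -coefZ -RL nth_default.
Qed.

Variable sigma : {rmorphism W -> W}.
Hypothesis pchar_k : p \in [pchar k].
Hypothesis sigma_frob : forall w : W, pi (sigma w) = pi w ^+ p.

(* The derivative of the lift relation is p times a relation over W, which survives
   reduction mod p because pi kills the p-torsion; the p-th powers have zero derivative. *)
Lemma is_mp_deriv (F : {poly W}) (w gam : {poly k}) :
  let Fb := map_poly pi F in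
  is_mp p pi (Fb^`() ^+ p * w - 2%:R * gam * Fb ^+ p)
    (F ^+ p - (map_poly sigma F \Po 'X^p)) ->
  Fb^`() ^+ p * ('X^(p.-1) + w^`()) = Fb ^+ p.-1 * (Fb^`() + 2%:R * gam^`() * Fb).
Proof.
move=> Fb [L [piL defR]].
have chP : p \in [pchar {poly k}] := rmorph_pchar polyC pchar_k.
have p_gt0 : (0 < p)%N := prime_gt0 (pcharf_prime pchar_k).
have dR : p%:R *: (F^`() * F ^+ p.-1 - ((map_poly sigma F)^`() \Po 'X^p) * 'X^(p.-1) - L^`()) = 0.
  have := congr1 deriv defR; rewrite derivB deriv_exp deriv_comp derivXn derivZ.
  by rewrite -!scaler_nat -scalerAr !scalerBr => ->; rewrite subrr.
have sigmaFb : map_poly pi (map_poly sigma F) = map_poly (pFrobenius_aut pchar_k) Fb.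
  by apply/polyP => j; rewrite !coef_map /= sigma_frob pFrobenius_autE.
move: (map_poly_scale_pchar_eq0 dR).
rewrite !rmorphB !rmorphM /= map_comp_poly /= map_polyXn -!deriv_map sigmaFb piL.
rewrite (deriv_map (pFrobenius_aut pchar_k)) -exp_pchar_poly -/Fb.
rewrite !derivE /= !deriv_exp !(mulrn_pchar chP) rmorphXn map_polyXn /= -/Fb.
have -> : Fb ^+ p = Fb ^+ p.-1 * Fb by rewrite -exprSr prednK.
move=> E; apply/eqP; rewrite -subr_eq0 -oppr0 -E.
by apply/eqP; ring.
Qed.

Lemma dvdp_is_mp (F : {poly W}) (w gam : {poly k}) :
  let Fb := map_poly pi F in coprimep Fb Fb^`() ->
  is_mp p pi (Fb^`() ^+ p * w - 2%:R * gam * Fb ^+ p)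
    (F ^+ p - (map_poly sigma F \Po 'X^p)) ->
  Fb ^+ p.-1 %| 'X^(p.-1) + w^`().
Proof.
move=> Fb cop mpF; have cop_p : coprimep (Fb ^+ p.-1) (Fb^`() ^+ p).
  by rewrite coprimep_expl // coprimep_expr.
by rewrite -(Gauss_dvdpr _ cop_p) (is_mp_deriv mpF) dvdp_mulr.
Qed.

End FrobeniusLift.

Section Evaluation.
Variables (k K : fieldType) (iota : {rmorphism k -> K}).
Implicit Types (q : {poly k}) (z w : K).

Lemma evpD q1 q2 z : evp iota (q1 + q2) z = evp iota q1 z + evp iota q2 z.
Proof. by rewrite /evp rmorphD hornerD. Qed.

Lemma evpB q1 q2 z : evp iota (q1 - q2) z = evp iota q1 z - evp iota q2 z.
Proof. by rewrite /evp rmorphB hornerD hornerN. Qed.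

Lemma evpN q z : evp iota (- q) z = - evp iota q z.
Proof. by rewrite /evp rmorphN hornerN. Qed.

Lemma evpM q1 q2 z : evp iota (q1 * q2) z = evp iota q1 z * evp iota q2 z.
Proof. by rewrite /evp rmorphM hornerM. Qed.

Lemma evpXn n z : evp iota 'X^n z = z ^+ n.
Proof. by rewrite /evp map_polyXn hornerXn. Qed.

Lemma evpC c z : evp iota c%:P z = iota c.
Proof. by rewrite /evp map_polyC hornerC. Qed.

Lemma evpX z : evp iota 'X z = z.
Proof. by rewrite /evp map_polyX hornerX. Qed.

Lemma evp_exp q n z : evp iota (q ^+ n) z = evp iota q z ^+ n.
Proof. by rewrite /evp rmorphXn horner_exp. Qed.

Lemma evpMn q n z : evp iota (q *+ n) z = evp iota q z *+ n.
Proof. by rewrite /evp rmorphMn hornerMn. Qed.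

Lemma evp_nat n z : evp iota n%:R z = n%:R.
Proof. by rewrite /evp rmorph_nat -polyC_natr hornerC. Qed.

Lemma evp_revp n q z : z != 0 -> (size q <= n.+1)%N ->
  evp iota (revp n q) z^-1 = z ^- n * evp iota q z.
Proof. by move=> z0 hq; rewrite /evp map_revp horner_revp ?size_map_poly. Qed.

Lemma evp_inj z : (forall q, q != 0 -> evp iota q z != 0) ->
  forall q1 q2, evp iota q1 z = evp iota q2 z -> q1 = q2.
Proof.
move=> transc q1 q2 e; apply/eqP; rewrite -subr_eq0; apply/negPn/negP => /transc.
by rewrite evpB e subrr eqxx.
Qed.

Lemma evp_revp_size q z : z != 0 ->
  evp iota (revp (size q) q) z = z ^+ size q * evp iota q z^-1.
Proof.
by move=> z0; rewrite -{1}(invrK z) evp_revp ?invr_eq0 ?leqnSn // exprVn invrK.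
Qed.

Lemma transcendental_neq0 z : (forall q, q != 0 -> evp iota q z != 0) -> z != 0.
Proof. by move=> transc; rewrite -(evpX z) transc ?polyX_eq0. Qed.

Lemma in_coord_evp_mul q z w n : in_coord iota z w (evp iota q z * w ^+ n).
Proof.
exists (q%:P * 'X^n); rewrite /ev2.
have -> : map_poly (evp iota ^~ z) (q%:P * 'X^n) = (evp iota q z)%:P * 'X^n.
  apply/polyP => j; rewrite coef_map_id0 /evp ?rmorph0 ?horner0 //.
  by rewrite !coefCM !coefXn; case: eqP; rewrite ?mulr1 ?mulr0 ?rmorph0 ?horner0.
by rewrite hornerCM hornerXn.
Qed.

Lemma in_coord_fst z w : in_coord iota z w z.
Proof. by have := in_coord_evp_mul 'X z w 0; rewrite evpX expr0 mulr1. Qed.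

End Evaluation.

Section Derivation.
Variables (k K : fieldType) (iota : {rmorphism k -> K}) (D : K -> K).
Hypothesis D_add : forall a b, D (a + b) = D a + D b.
Hypothesis D_mul : forall a b, D (a * b) = a * D b + b * D a.
Hypothesis D_const : forall c : k, D (iota c) = 0.

Lemma D1 : D 1 = 0.
Proof. by rewrite -(rmorph1 iota) D_const. Qed.

Lemma D_exp a n : D (a ^+ n) = a ^+ n.-1 * D a *+ n.
Proof.
elim: n => [|[|n] IH]; first by rewrite D1 mulr0n.
  by rewrite expr1 mul1r.
by rewrite exprS D_mul IH mulrnAr mulrA -exprS mulrC -mulrSr.
Qed.

Lemma D_exp_pchar p a : p \in [pchar k] -> D (a ^+ p) = 0.
Proof. by move=> chp; rewrite D_exp (mulrn_pchar (rmorph_pchar iota chp)). Qed.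

Lemma D_mul_const c a : D c = 0 -> D (c * a) = c * D a.
Proof. by move=> Dc; rewrite D_mul Dc mulr0 addr0. Qed.

Lemma D_inv a : a != 0 -> D a^-1 = - (D a / a ^+ 2).
Proof.
move=> a0; have := D_mul a a^-1; rewrite mulfV // D1 => /eqP.
by rewrite eq_sym addr_eq0 => /eqP Da; apply: (mulfI a0); rewrite Da; field.
Qed.

Lemma D_evp q z : D (evp iota q z) = evp iota q^`() z * D z.
Proof.
elim/poly_ind: q => [|q c IH].
  by rewrite deriv0 /evp !rmorph0 !horner0 mul0r -{1}(rmorph0 iota) D_const.
by rewrite derivMXaddC !evpD !evpM !evpX evpC D_add D_const addr0 D_mul IH; ring.
Qed.

Lemma frobenius_lift_cocycle p (u v : {poly k}) (x y : K) (g i : nat) :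
  p \in [pchar k] -> D x = 1 -> x != 0 -> y != 0 -> (i < g)%N ->
  let x1 := x^-1 in
  let t := y / x ^+ (g + 1) in
  let fU := x ^+ (i * p) * ((x ^+ (p - 1) + evp iota u^`() x) / y ^+ (p - 1)) * (1 / y) in
  let fV := - (x1 ^+ (p * (g - 1 - i)) * ((x1 ^+ (p - 1) + evp iota v^`() x1) / t ^+ (p - 1))
               * (1 / t) * D x1) in
  let h := x ^+ (i * p) * ((evp iota u x + x ^+ (2 * p) * evp iota v x1) / y ^+ p) in
  fV - fU + D h = 0.
Proof.
move=> chp Dx x0 y0 ig x1 t fU fV h.
have p_gt0 : (0 < p)%N := prime_gt0 (pcharf_prime chp).
have Dx1 : D x1 = - x1 ^+ 2 by rewrite D_inv // Dx /x1 exprVn; field.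
have Dh : D h = x ^+ (i * p) *
    ((evp iota u^`() x - x ^+ (2 * p) * x1 ^+ 2 * evp iota v^`() x1) / y ^+ p).
  rewrite /h D_mul_const; last by rewrite exprM D_exp_pchar.
  congr (_ * _).
  rewrite -exprVn mulrC D_mul_const ?D_exp_pchar // mulrC; congr (_ * _).
  rewrite D_add D_mul_const; last by rewrite exprM D_exp_pchar.
  by rewrite !D_evp Dx Dx1; ring.
have pm1 (z : K) : z != 0 -> z ^+ (p - 1) = z ^+ p / z.
  by move=> z0; rewrite -{2}(subnK p_gt0) addn1 exprSr mulfK.
have [j gE] : exists j, g = (j + i).+1 by exists (g - 1 - i)%N; lia.
have jE : (g - 1 - i = j)%N by lia.
rewrite Dh /fV /fU Dx1 /t /x1 !pm1 ?mulf_neq0 ?invr_eq0 ?expf_neq0 //.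
rewrite jE !exprVn expr_div_n gE addn1 mulnC (mulnC 2) !exprM -addn2 !exprD !exprMn.
by field; rewrite !expf_neq0 ?x0 ?y0 ?oner_eq0.
Qed.

End Derivation.

(* With  T^(p-1) + e = r Fb^(p-1)  and  w^2 = Fb(z),  the form is  q(z) r(z) w^(p-2) dz. *)
Lemma regular_form_frobenius_lift (k K : fieldType) (iota : {rmorphism k -> K}) (D : K -> K)
    p (q Fb e : {poly k}) (z w : K) :
  (1 < p)%N -> Fb ^+ p.-1 %| 'X^(p.-1) + e -> w ^+ 2 = evp iota Fb z -> w != 0 ->
  regular_form iota D z w
    (evp iota q z * ((z ^+ (p - 1) + evp iota e z) / w ^+ (p - 1)) * (1 / w) * D z).
Proof.
move=> p_gt1 /dvdpP [r rE] wE w0.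
exists [:: (evp iota (q * r) z * w ^+ (p - 2), z)]; split.
  by move=> ab; rewrite inE => /eqP -> /=; split; [exact: in_coord_evp_mul | exact: in_coord_fst].
rewrite big_seq1 /=.
have := congr1 (evp iota ^~ z) rE; rewrite /= evpD evpXn evpM evp_exp -wE -exprM subn1 => ->.
have -> : p.-1 = (p - 2).+1 by lia.
by rewrite evpM mulnC exprM [w ^+ (p - 2).+1]exprS; field; rewrite w0 expf_neq0.
Qed.

Section ChartChange.
Variables (W : comNzRingType) (k : fieldType) (p : nat).
Variables (pi : {rmorphism W -> k}) (sigma : {rmorphism W -> W}).
Hypothesis pi_ker : forall z : W, p%:R * z = 0 -> pi z = 0.
Hypothesis pchar_k : p \in [pchar k].
Variables (K : fieldType) (iota : {rmorphism k -> K}) (x : K).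
Hypothesis x_transc : forall q : {poly k}, q != 0 -> evp iota q x != 0.
Variables (d : nat) (P2 : {poly W}) (u alpha v beta : {poly k}).
Hypothesis P2_size : size P2 = d.+1.
Let Pb := map_poly pi P2.
Let Qb := revp d.+1 Pb.
Hypothesis mpP : is_mp p pi (Pb^`() ^+ p * u - 2%:R * alpha * Pb ^+ p)
  (P2 ^+ p - (map_poly sigma P2 \Po 'X^p)).
Hypothesis mpQ : is_mp p pi (Qb^`() ^+ p * v - 2%:R * beta * Qb ^+ p)
  (revp d.+1 P2 ^+ p - (map_poly sigma (revp d.+1 P2) \Po 'X^p)).

Let p_gt0 : (0 < p)%N := prime_gt0 (pcharf_prime pchar_k).
Let x_neq0 : x != 0 := transcendental_neq0 x_transc.

Lemma reduced_relation_revp :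
  Qb^`() ^+ p * v - 2%:R * beta * Qb ^+ p
  = revp (p * d.+1) (Pb^`() ^+ p * u - 2%:R * alpha * Pb ^+ p).
Proof.
apply: (is_mp_inj pi_ker mpQ); rewrite -revp_frobenius_defect ?P2_size //.
exact: is_mp_revp.
Qed.

Let Px := evp iota Pb x.
Let Pd := evp iota Pb^`() x.

Lemma size_reduced_relation :
  (size (Pb^`() ^+ p * u - 2%:R * alpha * Pb ^+ p)%R <= (p * d.+1).+1)%N.
Proof.
apply: leq_trans (size_is_mp pi_ker mpP) _.
apply: leq_trans (size_frobenius_defect _ _ _) _; first by rewrite P2_size.
by rewrite ltnS leq_mul.
Qed.

Let size_Pb : (size Pb <= d.+1)%N.
Proof. by rewrite (leq_trans (size_map_poly_leq _ _)) ?P2_size. Qed.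

Let size_Pb_deriv : (size Pb^`() <= d.+1)%N.
Proof. by rewrite /deriv (leq_trans (size_poly _ _)) // (leq_trans (leq_pred _)). Qed.

Lemma evp_Qb_inv : x ^+ d.+1 * evp iota Qb x^-1 = Px.
Proof. by rewrite evp_revp ?mulVKf ?expf_neq0 ?x_neq0 ?(leqW size_Pb).
Qed.

Lemma evp_Qb_deriv_inv :
  x ^+ d.+1 * evp iota Qb^`() x^-1 = x * ((d.+1)%:R * Px - x * Pd).
Proof.
have := congr1 (evp iota ^~ x^-1) (revp_deriv d Pb).
rewrite /= evp_revp ?x_neq0 ?size_Pb_deriv // evpB evpMn evpM evpX -/Qb -/Pd.
rewrite -evp_Qb_inv -mulr_natr.
move=> /(congr1 (fun e => x ^+ d * e)); rewrite mulVKf ?expf_neq0 ?x_neq0 // => ->.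
by rewrite exprS; field; rewrite x_neq0.
Qed.

(* Evaluate the reversed relation at 1/x and clear denominators with x^(p(d+1));
   the Frobenius of K turns the p-th power of x^(d+1) Qb'(1/x) into a difference. *)
Lemma chart_change_identity :
  Pd ^+ p * (evp iota u x + x ^+ (2 * p) * evp iota v x^-1) =
  Px ^+ p * ((d.+1)%:R ^+ p * x ^+ p * evp iota v x^-1
             - 2%:R * evp iota beta x^-1 + 2%:R * evp iota alpha x).
Proof.
have chK : p \in [pchar K] := rmorph_pchar iota pchar_k.
have := congr1 (evp iota ^~ x^-1) reduced_relation_revp.
rewrite /= evp_revp ?x_neq0 ?size_reduced_relation //.
move=> /(congr1 (fun e => x ^+ (p * d.+1) * e)); rewrite mulVKf ?expf_neq0 ?x_neq0 //.
rewrite mulnC exprM !(evpB, evpM, evp_exp, evp_nat) -/Px -/Pd.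
set Qx := evp iota Qb x^-1; set Qd := evp iota Qb^`() x^-1; set V := evp iota v x^-1.
have -> : x ^+ d.+1 ^+ p * (Qd ^+ p * V - 2%:R * evp iota beta x^-1 * Qx ^+ p)
    = (x ^+ d.+1 * Qd) ^+ p * V - 2%:R * evp iota beta x^-1 * (x ^+ d.+1 * Qx) ^+ p.
  by rewrite !exprMn; ring.
have frobB (a b : K) : (a - b) ^+ p = a ^+ p - b ^+ p.
  by rewrite -!(pFrobenius_autE chK) rmorphB.
rewrite evp_Qb_inv evp_Qb_deriv_inv exprMn frobB !exprMn (mulnC 2) exprM.
move/eqP; rewrite -subr_eq0 => /eqP AP0; apply/eqP; rewrite -subr_eq0 -oppr0 -AP0; apply/eqP.
ring.
Qed.

Lemma chart_change_dvdp : coprimep Pb Pb^`() ->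
  exists (M : nat) (S : {poly k}),
    x ^+ M * (evp iota u x + x ^+ (2 * p) * evp iota v x^-1) = evp iota S x * Px ^+ p.
Proof.
move=> copP; set nv := size v; set nb := size beta.
set G := 'X^(nv + nb) * u + 'X^(2 * p + nb) * revp nv v.
set H := (d.+1)%:R ^+ p * 'X^(nb + p) * revp nv v - 2%:R * ('X^nv * revp nb beta)
         + 2%:R * ('X^(nv + nb) * alpha).
have evG : evp iota G x = x ^+ (nv + nb) * (evp iota u x + x ^+ (2 * p) * evp iota v x^-1).
  by rewrite !(evpD, evpM, evpXn) evp_revp_size ?x_neq0 // !exprD; ring.
have evH : evp iota H x = x ^+ (nv + nb) * ((d.+1)%:R ^+ p * x ^+ p * evp iota v x^-1
             - 2%:R * evp iota beta x^-1 + 2%:R * evp iota alpha x).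
  rewrite !(evp_nat, evpD, evpN, evpM, evpXn, evp_exp) !evp_revp_size ?x_neq0 // -/nv -/nb.
  by rewrite !exprD; ring.
have GH : Pb^`() ^+ p * G = Pb ^+ p * H.
  apply: (evp_inj x_transc); rewrite !(evpM, evp_exp) evG evH -/Px -/Pd.
  by rewrite mulrCA chart_change_identity mulrCA.
have /dvdpP [S GS] : Pb ^+ p %| G.
  have cop_p : coprimep (Pb ^+ p) (Pb^`() ^+ p) by rewrite coprimep_expl // coprimep_expr.
  by rewrite -(Gauss_dvdpr _ cop_p) GH dvdp_mulr.
by exists (nv + nb)%N, S; rewrite -evG GS evpM evp_exp.
Qed.

End ChartChange.

Lemma in_localization_div (k K : fieldType) (iota : {rmorphism k -> K}) (x y a : K)
    (q S : {poly k}) (M n : nat) :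
  x != 0 -> y != 0 -> x ^+ M * a = evp iota S x * (y ^+ 2) ^+ n ->
  in_localization iota x y (evp iota q x * (a / y ^+ n)).
Proof.
move=> x0 y0 aE; exists M, (evp iota (q * S) x * y ^+ n); split.
  exact: in_coord_evp_mul.
have -> : a = evp iota S x * (y ^+ 2) ^+ n / x ^+ M.
  by rewrite -aE [x ^+ M * a]mulrC mulfK ?expf_neq0.
by rewrite evpM -exprM mulnC exprM; field; rewrite !expf_neq0.
Qed.

Unset Implicit Arguments.
Theorem mainTheorem13
  (k : finFieldType) (p : nat)
  (W : comNzRingType) (pi : {rmorphism W -> k}) (sigma : {rmorphism W -> W})
  (g : nat) (P2 : {poly W}) (u alpha v beta : {poly k})
  (K : fieldType) (iota : {rmorphism k -> K}) (D : K -> K) (x y : K) (i : nat) :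
  prime p -> p \in [pchar k] -> p != 2%N ->
  (p ^ 2)%:R = 0 :> W ->
  (forall a : k, exists w : W, pi w = a) ->
  (forall w : W, pi w = 0 <-> exists z : W, w = p%:R * z) ->
  (forall z : W, p%:R * z = 0 -> pi z = 0) ->
  (forall w : W, pi (sigma w) = pi w ^+ p) ->
  P2 \is monic -> size P2 = (2 * g + 1).+1 ->
  separable_poly (map_poly pi P2) ->
  let d := (2 * g + 1)%N in
  let Pb := map_poly pi P2 in
  let Q2 := recip d P2 in
  let Qb := recip d Pb in
  is_mp p pi (Pb^`() ^+ p * u - 2%:R * alpha * Pb ^+ p)
             (P2 ^+ p - ((map_poly sigma P2) \Po 'X^p)) ->
  is_mp p pi (Qb^`() ^+ p * v - 2%:R * beta * Qb ^+ p)
             (Q2 ^+ p - ((map_poly sigma Q2) \Po 'X^p)) ->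
  (forall q : {poly k}, q != 0 -> evp iota q x != 0) ->
  y ^+ 2 = evp iota Pb x ->
  (forall a b, D (a + b) = D a + D b) ->
  (forall a b, D (a * b) = a * D b + b * D a) ->
  (forall c : k, D (iota c) = 0) ->
  D x = 1 ->
  (i < g)%N ->
  let x1 := x^-1 in
  let t := y / x ^+ (g + 1) in
  let fU := x ^+ (i * p) * ((x ^+ (p - 1) + evp iota u^`() x) / y ^+ (p - 1)) * (1 / y) in
  let fV := - (x1 ^+ (p * (g - 1 - i)) * ((x1 ^+ (p - 1) + evp iota v^`() x1) / t ^+ (p - 1))
               * (1 / t) * D x1) in
  let h := x ^+ (i * p) * ((evp iota u x + x ^+ (2 * p) * evp iota v x1) / y ^+ p) in
  [/\ regular_form iota D x y fU,
      regular_form iota D x1 t fV,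
      in_localization iota x y h
    & fV - fU + D h = 0].
Proof.
move=> p_prime chp _ _ _ _ pi_ker sigma_frob P2_monic P2_size P_sep d Pb Q2 Qb mpP mpQ
  x_transc y2 D_add D_mul D_const Dx i_lt_g x1 t fU fV h.
have x_neq0 := transcendental_neq0 x_transc.
have p_gt1 := prime_gt1 p_prime.
have Pb_size : size Pb = d.+1.
  by rewrite size_map_poly_id0 ?P2_size // (monicP P2_monic) rmorph1 oner_neq0.
have Pb_neq0 : Pb != 0 by rewrite -size_poly_gt0 Pb_size.
have y_neq0 : y != 0.
  by apply: contra_neq (x_transc _ Pb_neq0) => y0; rewrite -y2 y0 expr0n.
have t_neq0 : t != 0 by rewrite mulf_neq0 ?invr_eq0 ?expf_neq0.
have copP : coprimep Pb Pb^`() by move: P_sep; rewrite unlock.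
have copQ : coprimep Qb Qb^`() by rewrite /Qb recipE; exact: coprimep_revp_deriv.
have QbE : Qb = map_poly pi Q2 by rewrite /Q2 recipE map_revp.
have t2 : t ^+ 2 = evp iota Qb x1.
  rewrite /Qb recipE evp_revp ?Pb_size // -y2 expr_div_n -exprM mulnC.
  by rewrite (_ : (2 * (g + 1))%N = d.+1) 1?mulrC // /d; lia.
split.
- rewrite /fU -[_ * (1 / y)]mulr1 -{2}Dx -(evpXn iota (i * p)).
  apply: regular_form_frobenius_lift p_gt1 _ y2 y_neq0.
  exact (dvdp_is_mp pi_ker chp sigma_frob copP mpP).
- rewrite /fV -!mulNr -(evpXn iota (p * (g - 1 - i))) -evpN.
  apply: regular_form_frobenius_lift p_gt1 _ t2 t_neq0.
  rewrite QbE in copQ mpQ *; exact (dvdp_is_mp pi_ker chp sigma_frob copQ mpQ).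
- have [M [S ME]] := chart_change_dvdp pi_ker chp x_transc P2_size mpP mpQ copP.
  rewrite /h -(evpXn iota); apply: in_localization_div x_neq0 y_neq0 _.
  by rewrite y2; exact: ME.
- exact (frobenius_lift_cocycle D_add D_mul D_const u v chp Dx x_neq0 y_neq0 i_lt_g).
Qed.
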